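(* Let $m \geq 1$ be an integer and let $q \in (m, m+1)$ be a Pisot number. Then $q$ has no non-real Galois conjugate $q'$ with $|q'| < \frac{1}{m+1/2}$, and $q$ has at most one real Galois conjugate $q'$ with $|q'| < \frac{1}{m+1/2}$.
   Context: A Pisot number is a real algebraic integer $q>1$ all of whose other Galois conjugates have absolute value strictly less than $1$. *)

From mathcomp Require Import all_boot all_order all_algebra all_field.
Set Implicit Arguments. Unset Strict Implicit. Unset Printing Implicit Defensive.
Import Order.TTheory GRing.Theory Num.Theory.
Local Open Scope ring_scope.

(* Algebraic numbers are modelled in algC (algebraic closure of Q, with
   conjugation/norm).  y is a Galois conjugate of x iff y is a root of the
   minimal polynomial of x over Q (minCpoly x). *)
Definition galois_conjugate (x y : algC) : Prop := root (minCpoly x) y.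

Definition pisot (q : algC) : Prop :=
  [/\ q \is Num.real, 1 < q, q \in Aint &
      forall q' : algC, galois_conjugate q q' -> q' != q -> `|q'| < 1].

From mathcomp Require Import all_boot all_order all_algebra all_field.
From mathcomp Require polyorder.
From mathcomp Require Import ring zify.
Set Implicit Arguments.
Unset Strict Implicit.
Unset Printing Implicit Defensive.
Import Order.TTheory GRing.Theory Num.Theory.
Local Open Scope ring_scope.

(* The norm of the algebraic integer q, i.e. the constant coefficient of its
   minimal polynomial up to sign, is a nonzero integer, so the product of the
   absolute values of all conjugates of q is at least 1.  Since q is a simple
   root, all other factors of this product lie in the unit disc, hence two
   distinct conjugates a, b of absolute value < r force
   1 <= q |a| |b| < q r^2.  For r = 1/(m+1/2) and q < m+1 this is
   impossible because m+1 <= (m+1/2)^2; a non-real conjugate is excluded by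
   taking b its complex conjugate. *)

Lemma root_minCpoly_aut (nu : {rmorphism algC -> algC}) x z :
  root (minCpoly x) z -> root (minCpoly x) (nu z).
Proof.
have [p [Dp _] _] := minCpolyP x.
have nu_fixes_minCpoly : map_poly nu (minCpoly x) = minCpoly x.
  by rewrite Dp -map_poly_comp (eq_map_poly (fmorph_rat nu)).
by move=> root_z; rewrite -nu_fixes_minCpoly fmorph_root.
Qed.

Lemma root_deriv_XsubC_sqr (R : comNzRingType) (p : {poly R}) x :
  root (('X - x%:P) ^+ 2 * p)^`() x.
Proof.
rewrite /root derivM expr2 derivM derivXsubC !(hornerXsubC, hornerM, hornerD).
by rewrite subrr !(mul0r, mulr0, addr0).
Qed.

Lemma root_deriv_minCpoly x : root (minCpoly x)^`() x = false.
Proof.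
have [p [Dp mon_p] min_p] := minCpolyP x.
have size_p : (1 < size p)%N by have := size_minCpoly x; rewrite Dp size_map_poly.
have p'_neq0 : p^`() != 0.
  by rewrite -size_poly_eq0 polyorder.size_deriv -subn1 subn_eq0 -ltnNge.
apply/negP; rewrite Dp deriv_map min_p => /(dvdp_leq p'_neq0).
by rewrite leqNgt lt_size_deriv ?monic_neq0.
Qed.

Lemma minCpoly_split_simple x :
  exists2 rs : seq algC,
    minCpoly x = ('X - x%:P) * \prod_(z <- rs) ('X - z%:P) & x \notin rs.
Proof.
have [rs0 Dp] := closed_field_poly_normal (minCpoly x).
rewrite (monicP (minCpoly_monic x)) scale1r in Dp.
have x_rs0 : x \in rs0 by rewrite -root_prod_XsubC -Dp root_minCpoly.
exists (rem x rs0); first by rewrite Dp (big_rem x x_rs0).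
apply/negP => x_rs; have := root_deriv_minCpoly x.
by rewrite Dp (big_rem x x_rs0) (big_rem x x_rs) /= mulrA -expr2 root_deriv_XsubC_sqr.
Qed.

Lemma minCpoly_coef0_neq0 x : x != 0 -> (minCpoly x)`_0 != 0.
Proof.
move=> x_neq0; have [p [Dp mon_p] min_p] := minCpolyP x.
rewrite Dp coef_map fmorph_eq0; apply/eqP => p0_eq0.
have /factor_theorem[p1 Dp1] : root p 0 by rewrite /root horner_coef0 p0_eq0.
rewrite subr0 in Dp1.
have p1_neq0 : p1 != 0.
  by have := monic_neq0 mon_p; rewrite Dp1; apply: contra_neq => ->; rewrite mul0r.
have /(dvdp_leq p1_neq0) : p %| p1.
  have := root_minCpoly x; rewrite -min_p Dp Dp1 rmorphM /= map_polyX.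
  by rewrite rootM rootX (negPf x_neq0) orbF.
by rewrite Dp1 size_mulX // ltnn.
Qed.

Lemma norm_coef0_prod_XsubC (R : numDomainType) (rs : seq R) :
  `|(\prod_(z <- rs) ('X - z%:P))`_0| = \prod_(z <- rs) `|z|.
Proof.
rewrite -horner_coef0 horner_prod normr_prod; apply: eq_bigr => z _.
by rewrite hornerXsubC sub0r normrN.
Qed.

Lemma Aint_prod_norm_roots_ge1 x (rs : seq algC) :
  x \in Aint -> x != 0 -> minCpoly x = \prod_(z <- rs) ('X - z%:P) ->
  1 <= \prod_(z <- rs) `|z|.
Proof.
move=> Ax x_neq0 Dp; rewrite -norm_coef0_prod_XsubC -Dp.
by rewrite norm_intr_ge1 ?minCpoly_coef0_neq0 ?(polyOverP Ax).
Qed.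

Lemma prod_norm_le_pair (R : numDomainType) (s : seq R) a b :
  a \in s -> b \in s -> a != b -> {in s, forall z, `|z| <= 1} ->
  \prod_(z <- s) `|z| <= `|a| * `|b|.
Proof.
move=> a_s b_s ab s_le1; have b_rem : b \in rem a s by rewrite rem_mem // eq_sym.
rewrite (big_rem a a_s) (big_rem b b_rem) /= mulrA.
apply: ler_piMr; first by rewrite mulr_ge0.
rewrite big_seq; apply: prodr_ile1 => z z_rem.
by rewrite normr_ge0 s_le1 // (mem_rem (mem_rem z_rem)).
Qed.

Lemma pisot_conjugate_pair_norm_ge1 q a b : pisot q ->
  galois_conjugate q a -> galois_conjugate q b -> a != q -> b != q -> a != b ->
  1 <= q * `|a| * `|b|.
Proof.
case=> _ q_gt1 Aq conj_lt1 qa qb aq bq ab.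
have [rs Dp q_rs] := minCpoly_split_simple q.
have conj_rs z : galois_conjugate q z -> z != q -> z \in rs.
  rewrite /galois_conjugate Dp rootM root_XsubC root_prod_XsubC.
  by case/orP=> [/eqP->|]; rewrite ?eqxx.
have rs_le1 : {in rs, forall z, `|z| <= 1}.
  move=> z z_rs; apply/ltW/conj_lt1; last by apply: contraNneq q_rs => <-.
  by rewrite /galois_conjugate Dp rootM root_prod_XsubC z_rs orbT.
have q_gt0 : 0 < q := lt_trans ltr01 q_gt1.
have Dp' : minCpoly q = \prod_(z <- q :: rs) ('X - z%:P) by rewrite big_cons.
have := Aint_prod_norm_roots_ge1 Aq (lt0r_neq0 q_gt0) Dp'.
rewrite big_cons (ger0_norm (ltW q_gt0)) -mulrA => /le_trans; apply.
by rewrite ler_pM2l // prod_norm_le_pair ?conj_rs.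
Qed.

Lemma pisot_small_conjugates_eq (q r a b : algC) : pisot q -> q * r ^+ 2 <= 1 ->
  galois_conjugate q a -> galois_conjugate q b -> `|a| < r -> `|b| < r -> a = b.
Proof.
move=> pq qr2 qa qb ar br; have [_ q_gt1 _ _] := pq.
have q_gt0 : 0 < q := lt_trans ltr01 q_gt1.
have small_lt1 (z w : algC) : `|z| < r -> `|w| < r -> q * `|z| * `|w| < 1.
  move=> zr wr; apply: lt_le_trans qr2.
  by rewrite -mulrA expr2 ltr_pM2l // ltr_pM.
have small_neq_q (z : algC) : `|z| < r -> z != q.
  move=> zr; apply/eqP => zq; have := small_lt1 _ _ zr zr.
  by rewrite zq (ger0_norm (ltW q_gt0)) le_gtF // !mulr_ege1 // ltW.
apply/eqP; apply: contraT => ab.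
have := pisot_conjugate_pair_norm_ge1 pq qa qb (small_neq_q _ ar) (small_neq_q _ br) ab.
by move=> /le_lt_trans/(_ (small_lt1 _ _ ar br)); rewrite ltxx.
Qed.

Lemma natrS_le_sqr_add_half (R : numFieldType) m :
  (1 <= m)%N -> m.+1%:R <= (m%:R + 2^-1) ^+ 2 :> R.
Proof.
move=> m_ge1; rewrite -(@ler_pM2l _ 4%:R) ?ltr0n //.
have -> : 4%:R * (m%:R + 2^-1) ^+ 2 = (m.*2.+1 ^ 2)%:R :> R.
  by rewrite natrX -[m.*2.+1]addn1 natrD -muln2 natrM; field.
by rewrite -natrM ler_nat; nia.
Qed.

Theorem theorem2p1 (m : nat) (q : algC) :
  (1 <= m)%N -> pisot q -> m%:R < q -> q < m.+1%:R ->
  (forall q' : algC, galois_conjugate q q' -> q' \isn't Num.real ->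
     ~ (`|q'| < (m%:R + 2^-1)^-1)) /\
  (forall q1 q2 : algC, galois_conjugate q q1 -> galois_conjugate q q2 ->
     q1 \is Num.real -> q2 \is Num.real ->
     `|q1| < (m%:R + 2^-1)^-1 -> `|q2| < (m%:R + 2^-1)^-1 -> q1 = q2).
Proof.
move=> m_ge1 pq _ q_lt.
set c : algC := m%:R + 2^-1.
have c_gt0 : 0 < c by rewrite addr_gt0 ?ltr0n ?invr_gt0.
have qc : q * c^-1 ^+ 2 <= 1.
  rewrite exprVn ler_pdivrMr ?exprn_gt0 // mul1r.
  exact: le_trans (ltW q_lt) (natrS_le_sqr_add_half _ m_ge1).
split=> [z qz /negP z_nonreal zc | a b qa qb _ _]; last first.
  exact: pisot_small_conjugates_eq pq qc qa qb.
have qz' : galois_conjugate q z^* := root_minCpoly_aut (@Num.conj algC) qz.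
have zc' : `|z^*| < c^-1 by rewrite norm_conjC.
by apply: z_nonreal; rewrite CrealE (pisot_small_conjugates_eq pq qc qz' qz zc' zc).
Qed.
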